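(* Let $X$ and $Y$ be metric spaces with finite upper box dimensions, with metrics $d_X$ and $d_Y$, and let $\phi\colon X \to Y$ be any function. Set $s = \overline{\dim}_\mathrm{B} X + \overline{\dim}_\mathrm{B} Y + 2$. Then there exists a countable dense subset $Q = \{q_1, q_2, \dots\}$ of $X$ (with this enumeration) such that for every $x \in X$ there exists a sequence $(q_{n_k})_{k}$ of points of $Q$ with $\phi(q_{n_k}) \to \phi(x)$ as $k \to \infty$, $q_{n_k} \to x$ as $k\to\infty$, and $d_X(q_{n_k}, x) \le n_k^{-1/s}$ for all $k$.
   Context: The upper box dimension $\overline{\dim}_\mathrm{B} X$ of a metric space $X$ is the infimum of those $t$ such that for every $r>0$ there is a cover of $X$ by at most $r^{-t}$ balls of radius $r$ centred in $X$. *)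

From Stdlib Require Export Reals List.
Open Scope R_scope.

Definition is_metric {T : Type} (d : T -> T -> R) : Prop :=
  (forall x y, 0 <= d x y) /\
  (forall x y, d x y = 0 <-> x = y) /\
  (forall x y, d x y = d y x) /\
  (forall x y z, d x z <= d x y + d y z).

Definition covered_by_balls {T : Type} (d : T -> T -> R) (r N : R) : Prop :=
  exists cs : list T, INR (length cs) <= N /\
    forall x : T, exists c, In c cs /\ d c x < r.

Definition box_exponent {T : Type} (d : T -> T -> R) (t : R) : Prop :=
  exists r0 : R, 0 < r0 /\
    forall r : R, 0 < r < r0 -> covered_by_balls d r (Rpower r (- t)).

(* D is the (finite, real) infimum of the admissible exponents, i.e.
   the upper box dimension of (T, d) exists as a real number and equals D. *)
Definition upper_box_dim {T : Type} (d : T -> T -> R) (D : R) : Prop :=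
  (forall t, box_exponent d t -> D <= t) /\
  (forall b, (forall t, box_exponent d t -> b <= t) -> b <= D).

(* The sequence (q_1, q_2, ...) is encoded as q : nat -> T with q_m = q (m-1). *)
Definition dense_seq {T : Type} (d : T -> T -> R) (q : nat -> T) : Prop :=
  forall x : T, forall eps : R, 0 < eps -> exists n : nat, d (q n) x < eps.

Definition converges {T : Type} (d : T -> T -> R) (u : nat -> T) (l : T) : Prop :=
  forall eps : R, 0 < eps -> exists K : nat, forall k : nat, (K <= k)%nat -> d (u k) l < eps.

(* Choose box exponents tX < DX + 1 and tY < DY + 1, so that a := tX + tY < s.
   At level j, cover X and Y by balls of radius r_j = 2^(-(j+1)/s) / 2; picking
   one point of X in each nonempty set B ∩ phi^-1(B') gives at most
   r_j^(-a) <= 2^j points that approximate every x within 2 r_j in X and every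
   phi x within 2 r_j in Y.  Placing the level-j points at the indices
   2^j, ..., 2^(j+1) - 1 gives each of them an index n with
   2 r_j = 2^(-(j+1)/s) <= (n+1)^(-1/s). *)

From Stdlib Require Import Reals List Lia Lra ClassicalEpsilon.
Open Scope R_scope.

Definition eventually (P : nat -> Prop) : Prop :=
  exists K, forall j, (K <= j)%nat -> P j.

Lemma eventually_and (P Q : nat -> Prop) :
  eventually P -> eventually Q -> eventually (fun j => P j /\ Q j).
Proof.
  intros [K1 HP] [K2 HQ]. exists (K1 + K2)%nat.
  intros j Hj. split; [apply HP | apply HQ]; lia.
Qed.

Lemma eventually_lt_linear (m c : R) :
  0 < m -> eventually (fun j => c < m * INR j).
Proof.
  intros Hm. destruct (INR_unbounded (c / m)) as [K HK]. exists K.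
  intros j Hj. apply le_INR in Hj.
  replace c with (m * (c / m)) by (field; lra).
  apply Rmult_lt_compat_l; lra.
Qed.

Lemma Rle_Rpower_l_opp (a b c : R) :
  0 <= c -> 0 < a <= b -> Rpower b (- c) <= Rpower a (- c).
Proof.
  intros Hc Hab. rewrite !Rpower_Ropp.
  apply Rinv_le_contravar; [apply exp_pos | now apply Rle_Rpower_l].
Qed.

Lemma metric_lt_triangle {T : Type} (d : T -> T -> R) (c p x : T) (r r' : R) :
  is_metric d -> d c p < r -> d c x < r' -> d p x < r + r'.
Proof.
  intros [_ [_ [d_sym d_tri]]] Hp Hx.
  specialize (d_tri p c x). rewrite (d_sym p c) in d_tri. lra.
Qed.

Section BoxDimension.

Context {T : Type} (d : T -> T -> R).

Lemma box_exponent_nonneg (x0 : T) (t : R) : box_exponent d t -> 0 <= t.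
Proof.
  intros [r0 [Hr0 cover]].
  set (r := Rmin r0 1 / 2).
  assert (Hr : 0 < r < r0 /\ r < 1)
    by (unfold r; pose proof (Rmin_l r0 1); pose proof (Rmin_r r0 1);
        pose proof (Rmin_glb_lt r0 1 0 Hr0 Rlt_0_1); lra).
  destruct (cover r (proj1 Hr)) as [cs [Hlen Hcov]].
  destruct (Hcov x0) as [c [Hc _]].
  assert (H1 : 1 <= INR (length cs))
    by (apply (le_INR 1); destruct cs; [contradiction | simpl; lia]).
  destruct (Rle_or_lt 0 t) as [|Ht]; [assumption | exfalso].
  assert (Hlt : Rpower r (- t) < Rpower 1 (- t)) by (apply Rlt_Rpower_l; lra).
  unfold Rpower at 2 in Hlt. rewrite ln_1, Rmult_0_r, exp_0 in Hlt. lra.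
Qed.

Lemma upper_box_dim_inhabited (D : R) : upper_box_dim d D -> inhabited T.
Proof.
  intros [lower _]. destruct (classic (inhabited T)) as [|empty]; [assumption|].
  assert (Hall : box_exponent d (D - 1)); [|specialize (lower _ Hall); lra].
  exists 1. split; [lra|]. intros r _. exists nil. split.
  - simpl. unfold Rpower. left; apply exp_pos.
  - intro x. exfalso; exact (empty (inhabits x)).
Qed.

Lemma box_exponent_lt_upper_box_dim (D e : R) :
  upper_box_dim d D -> 0 < e -> exists t, box_exponent d t /\ t < D + e.
Proof.
  intros [_ greatest] He. apply NNPP; intro none.
  assert (D + e <= D); [|lra].
  apply greatest. intros t Ht. apply Rnot_lt_le. intro Hlt.
  exact (none (ex_intro _ t (conj Ht Hlt))).
Qed.

End BoxDimension.

Definition joint_net {X Y : Type} (dX : X -> X -> R) (dY : Y -> Y -> R)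
  (phi : X -> Y) (r : R) (ps : list X) : Prop :=
  forall x, exists p, In p ps /\ dX p x < r /\ dY (phi p) (phi x) < r.

Lemma joint_net_of_covers {X Y : Type} (dX : X -> X -> R) (dY : Y -> Y -> R)
  (phi : X -> Y) (r NX NY : R) :
  is_metric dX -> is_metric dY ->
  covered_by_balls dX r NX -> covered_by_balls dY r NY ->
  exists ps, INR (length ps) <= NX * NY /\ joint_net dX dY phi (2 * r) ps.
Proof.
  intros hX hY [cs [HcsN Hcs]] [cy [HcyN Hcy]].
  set (pick cc := epsilon (inhabits (fst cc))
                    (fun p => dX (fst cc) p < r /\ dY (snd cc) (phi p) < r)).
  exists (map pick (list_prod cs cy)). split.
  - rewrite length_map, length_prod, mult_INR.
    apply Rmult_le_compat; auto using pos_INR.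
  - intro x.
    destruct (Hcs x) as [c [Hc Hcx]]. destruct (Hcy (phi x)) as [c' [Hc' Hc'x]].
    assert (Hpick : dX c (pick (c, c')) < r /\ dY c' (phi (pick (c, c'))) < r)
      by (apply (epsilon_spec _ (fun p => dX c p < r /\ dY c' (phi p) < r)); eauto).
    exists (pick (c, c')). split; [apply in_map, in_prod; assumption|].
    replace (2 * r) with (r + r) by ring.
    split; eapply metric_lt_triangle; eauto; apply Hpick.
Qed.

(* Block [j] occupies the indices [2^j, 2^(j+1)). *)
Definition concat_blocks {A : Type} (a0 : A) (L : nat -> list A) (n : nat) : A :=
  nth (n - 2 ^ Nat.log2 n) (L (Nat.log2 n)) a0.

Lemma concat_blocks_In {A : Type} (a0 : A) (L : nat -> list A) (j : nat) (p : A) :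
  (length (L j) <= 2 ^ j)%nat -> In p (L j) ->
  exists n, (S n <= 2 ^ S j)%nat /\ concat_blocks a0 L n = p.
Proof.
  intros Hlen Hp. destruct (In_nth _ _ a0 Hp) as [i [Hi Hip]].
  assert (Hlog : Nat.log2 (2 ^ j + i) = j)
    by (apply Nat.log2_unique; rewrite ?Nat.pow_succ_r'; lia).
  exists (2 ^ j + i)%nat. unfold concat_blocks. rewrite Hlog.
  replace (2 ^ j + i - 2 ^ j)%nat with i by lia.
  split; [rewrite Nat.pow_succ_r'; lia | assumption].
Qed.

Section Scale.

Variable s : R.
Hypothesis s_pos : 0 < s.

Definition scale (j : nat) : R := Rpower 2 (- (INR (S j) / s)).

Lemma scale_pos (j : nat) : 0 < scale j.
Proof. apply exp_pos. Qed.

Lemma scale_eventually_lt (eps : R) : 0 < eps -> eventually (fun j => scale j < eps).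
Proof.
  intros Heps.
  assert (Hm : 0 < ln 2 / s) by (pose proof ln_lt_2; apply Rdiv_lt_0_compat; lra).
  destruct (eventually_lt_linear (ln 2 / s) (- ln eps) Hm) as [K HK].
  exists K. intros j Hj. specialize (HK j Hj).
  unfold scale, Rpower. rewrite <- (exp_ln eps Heps). apply exp_increasing.
  replace (- (INR (S j) / s) * ln 2) with (- (ln 2 / s * INR j) - ln 2 / s)
    by (rewrite S_INR; field; lra).
  lra.
Qed.

Lemma scale_le_Rpower_index (n j : nat) :
  (S n <= 2 ^ S j)%nat -> scale j <= Rpower (INR (S n)) (- (1 / s)).
Proof.
  intros Hn.
  replace (scale j) with (Rpower (2 ^ S j) (- (1 / s))).
  2:{ unfold scale. rewrite <- Rpower_pow, Rpower_mult by lra. f_equal. field; lra. }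
  apply Rle_Rpower_l_opp.
  - left; apply Rdiv_lt_0_compat; lra.
  - split; [apply lt_0_INR; lia|].
    apply le_INR in Hn. rewrite pow_INR in Hn. replace (INR 2) with 2 in Hn by (simpl; lra).
    exact Hn.
Qed.

Lemma half_scale_Rpower_le_pow (a : R) :
  a < s -> eventually (fun j => Rpower (scale j / 2) (- a) <= 2 ^ j).
Proof.
  intros Has.
  assert (Hm : 0 < 1 - a / s)
    by (replace (1 - a / s) with ((s - a) / s) by (field; lra);
        apply Rdiv_lt_0_compat; lra).
  destruct (eventually_lt_linear (1 - a / s) (a / s + a) Hm) as [K HK].
  exists K. intros j Hj. specialize (HK j Hj).
  assert (Ehalf : scale j / 2 = Rpower 2 (- (INR (S j) / s) - 1))
    by (unfold Rminus; rewrite Rpower_plus, (Rpower_Ropp 2 1), Rpower_1 by lra; reflexivity).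
  rewrite Ehalf, Rpower_mult, <- (Rpower_pow j 2) by lra.
  apply Rle_Rpower; [lra|].
  replace ((- (INR (S j) / s) - 1) * - a) with (a / s * INR j + (a / s + a))
    by (rewrite S_INR; field; lra).
  lra.
Qed.

Lemma exists_joint_nets {X Y : Type} (dX : X -> X -> R) (dY : Y -> Y -> R)
  (phi : X -> Y) (tX tY : R) :
  is_metric dX -> is_metric dY ->
  box_exponent dX tX -> box_exponent dY tY -> tX + tY < s ->
  exists (J : nat) (L : nat -> list X), forall j,
    (length (L j) <= 2 ^ j)%nat /\ ((J <= j)%nat -> joint_net dX dY phi (scale j) (L j)).
Proof.
  intros hX hY [r0X [Hr0X coverX]] [r0Y [Hr0Y coverY]] Ha.
  destruct (eventually_and _ _ (scale_eventually_lt r0X Hr0X)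
             (eventually_and _ _ (scale_eventually_lt r0Y Hr0Y)
               (half_scale_Rpower_le_pow (tX + tY) Ha))) as [J HJ].
  assert (nets : forall j, exists ps : list X,
    (length ps <= 2 ^ j)%nat /\ ((J <= j)%nat -> joint_net dX dY phi (scale j) ps)).
  { intro j. destruct (Nat.le_gt_cases J j) as [Hj | Hj];
      [| exists nil; split; [simpl; lia | intro; lia]].
    destruct (HJ j Hj) as [HrX [HrY Hcount]].
    pose proof (scale_pos j) as Hr.
    destruct (joint_net_of_covers dX dY phi (scale j / 2) _ _ hX hY
                (coverX (scale j / 2) ltac:(lra)) (coverY (scale j / 2) ltac:(lra)))
      as [ps [Hlen Hnet]].
    exists ps. split.
    - apply INR_le. rewrite pow_INR. replace (INR 2) with 2 by (simpl; lra).
      rewrite <- Rpower_plus, <- Ropp_plus_distr in Hlen. lra.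
    - intros _. replace (scale j) with (2 * (scale j / 2)) by field. exact Hnet. }
  destruct (choice _ nets) as [L HL]. exists J, L. exact HL.
Qed.

Section Approximation.

Context {X Y : Type} (dX : X -> X -> R) (dY : Y -> Y -> R) (phi : X -> Y).
Variables (q : nat -> X) (J : nat).
Hypothesis approx : forall x j, (J <= j)%nat -> exists n,
  (S n <= 2 ^ S j)%nat /\ dX (q n) x < scale j /\ dY (phi (q n)) (phi x) < scale j.

Lemma dense_seq_of_approx : dense_seq dX q.
Proof.
  intros x eps Heps. destruct (scale_eventually_lt eps Heps) as [K HK].
  destruct (approx x (J + K) ltac:(lia)) as [n [_ [Hn _]]].
  exists n. specialize (HK (J + K)%nat ltac:(lia)). lra.
Qed.

Lemma converges_of_lt_scale {T : Type} (d : T -> T -> R) (u : nat -> T) (l : T) :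
  (forall k, d (u k) l < scale (J + k)) -> converges d u l.
Proof.
  intros Hu eps Heps. destruct (scale_eventually_lt eps Heps) as [K HK].
  exists K. intros k Hk. specialize (HK (J + k)%nat ltac:(lia)).
  specialize (Hu k). lra.
Qed.

Lemma approximating_indices (x : X) : exists n : nat -> nat,
  converges dY (fun k => phi (q (n k))) (phi x) /\
  converges dX (fun k => q (n k)) x /\
  forall k, dX (q (n k)) x <= Rpower (INR (S (n k))) (- (1 / s)).
Proof.
  destruct (choice _ (fun k => approx x (J + k) ltac:(lia))) as [n Hn].
  exists n. split; [|split].
  - apply converges_of_lt_scale. intro k. apply Hn.
  - apply converges_of_lt_scale. intro k. apply Hn.
  - intro k. destruct (Hn k) as [Hidx [Hd _]].
    pose proof (scale_le_Rpower_index _ _ Hidx). lra.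
Qed.

End Approximation.

End Scale.

Theorem lemma3p1 (X Y : Type) (dX : X -> X -> R) (dY : Y -> Y -> R)
  (hX : is_metric dX) (hY : is_metric dY)
  (DX DY : R) (hDX : upper_box_dim dX DX) (hDY : upper_box_dim dY DY)
  (phi : X -> Y) :
  let s := DX + DY + 2 in
  exists q : nat -> X,
    dense_seq dX q /\
    forall x : X, exists n : nat -> nat,
      converges dY (fun k => phi (q (n k))) (phi x) /\
      converges dX (fun k => q (n k)) x /\
      forall k : nat, dX (q (n k)) x <= Rpower (INR (S (n k))) (- (1 / s)).
Proof.
  intros s.
  destruct (upper_box_dim_inhabited dX DX hDX) as [x0].
  destruct (box_exponent_lt_upper_box_dim dX DX 1 hDX Rlt_0_1) as [tX [HtX HtXD]].
  destruct (box_exponent_lt_upper_box_dim dY DY 1 hDY Rlt_0_1) as [tY [HtY HtYD]].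
  pose proof (box_exponent_nonneg dX x0 tX HtX).
  pose proof (box_exponent_nonneg dY (phi x0) tY HtY).
  assert (s_pos : 0 < s) by (unfold s; lra).
  destruct (exists_joint_nets s s_pos dX dY phi tX tY hX hY HtX HtY ltac:(unfold s; lra))
    as [J [L HL]].
  set (q := concat_blocks x0 L).
  assert (approx : forall x j, (J <= j)%nat -> exists n, (S n <= 2 ^ S j)%nat /\
            dX (q n) x < scale s j /\ dY (phi (q n)) (phi x) < scale s j).
  { intros x j Hj. destruct (HL j) as [Hlen Hnet].
    destruct (Hnet Hj x) as [p [Hp Hpx]].
    destruct (concat_blocks_In x0 L j p Hlen Hp) as [n [Hn Hqn]].
    exists n. subst q. rewrite Hqn. auto. }
  exists q. split.
  - exact (dense_seq_of_approx s s_pos dX dY phi q J approx).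
  - exact (approximating_indices s s_pos dX dY phi q J approx).
Qed.
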